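(* Let $n>1$, $q\geqslant 0$ and $m_0,\dots,m_{q-1}>1$ be natural numbers, and let $t,s_0,\dots,s_{q-1},u,v$ be variables distinct from $x$. Then the theory ${\sf TQ}$ proves that each of the formulas $\exists x\,[\Re_n(x\cdot t)\wedge \bigwedge_{j<q}\neg\Re_{m_j}(x\cdot s_j)]$, $\exists x\,[u<x\wedge \Re_n(x\cdot t)\wedge \bigwedge_{j<q}\neg\Re_{m_j}(x\cdot s_j)]$, $\exists x\,[x<v\wedge \Re_n(x\cdot t)\wedge \bigwedge_{j<q}\neg\Re_{m_j}(x\cdot s_j)]$ is equivalent to $\bigwedge_{j<q,\ m_j\mid n}\neg\Re_{m_j}(t^{-1}\cdot s_j)$, and that the formula $\exists x\,[u<x\wedge x<v\wedge \Re_n(x\cdot t)\wedge \bigwedge_{j<q}\neg\Re_{m_j}(x\cdot s_j)]$ is equivalent to $\bigwedge_{j<q,\ m_j\mid n}\neg\Re_{m_j}(t^{-1}\cdot s_j)\wedge u<v$. (Here $\bigwedge_{j<q,\,m_j\mid n}$ ranges over those $j<q$ with $m_j$ dividing $n$; an empty conjunction is the true formula.)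
   Context: Language $\{<,\times,\square^{-1},\mathbf{1}\}$; $y^n$ abbreviates $y\cdots y$ ($n$ times); for $n\geqslant 1$, $\Re_n(y)$ abbreviates the formula $\exists x\,(y=x^n)$. ${\sf TQ}$ is the theory axiomatized by: ($\texttt{O}_1$) $\forall x,y(x<y\rightarrow\neg(y<x))$; ($\texttt{O}_2$) $\forall x,y,z(x<y\wedge y<z\rightarrow x<z)$; ($\texttt{O}_3$) $\forall x,y(x<y\vee x=y\vee y<x)$; ($\texttt{M}_1$) $\forall x,y,z(x\cdot(y\cdot z)=(x\cdot y)\cdot z)$; ($\texttt{M}_2$) $\forall x(x\cdot\mathbf{1}=x)$; ($\texttt{M}_3$) $\forall x(x\cdot x^{-1}=\mathbf{1})$; ($\texttt{M}_4$) $\forall x,y(x\cdot y=y\cdot x)$; ($\texttt{M}_5$) $\forall x,y,z(x<y\rightarrow x\cdot z<y\cdot z)$; ($\texttt{M}_6$) $\exists y(y\neq\mathbf{1})$; ($\texttt{M}_{10}$) for each $n\geqslant1$: $\forall x,z\exists y(x<z\rightarrow x<y^n\wedge y^n<z)$; ($\texttt{M}_{11}$) for each $n\geqslant 1$, each $q\geqslant1$ and all natural numbers $m_0,\dots,m_{q-1}>1$: $\forall x_0,\dots,x_{q-1}\exists y\forall z\bigwedge_{j<q,\ m_j\nmid n}(y^n\cdot x_j\neq z^{m_j})$, the conjunction ranging over those $j<q$ for which $m_j$ does not divide $n$. *)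

From Stdlib Require Import Arith.

(* y^n abbreviates y*...*y (n times); for n = 0 we put 1 (never used: n >= 1). *)
Fixpoint pw {T : Type} (mul : T -> T -> T) (one : T) (y : T) (n : nat) : T :=
  match n with
  | 0 => one
  | 1 => y
  | S n' => mul y (pw mul one y n')
  end.

Record TQModel := {
  car :> Type;
  lt : car -> car -> Prop;
  mul : car -> car -> car;
  inv : car -> car;
  one : car;
  O1 : forall x y, lt x y -> ~ lt y x;
  O2 : forall x y z, lt x y -> lt y z -> lt x z;
  O3 : forall x y, lt x y \/ x = y \/ lt y x;
  M1 : forall x y z, mul x (mul y z) = mul (mul x y) z;
  M2 : forall x, mul x one = x;
  M3 : forall x, mul x (inv x) = one;
  M4 : forall x y, mul x y = mul y x;
  M5 : forall x y z, lt x y -> lt (mul x z) (mul y z);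
  M6 : exists y, y <> one;
  M10 : forall n, 1 <= n -> forall x z, exists y,
          lt x z -> lt x (pw mul one y n) /\ lt (pw mul one y n) z;
  M11 : forall n q (m : nat -> nat), 1 <= n -> 1 <= q ->
          (forall j, j < q -> 1 < m j) ->
          forall xs : nat -> car, exists y, forall z,
            forall j, j < q -> ~ Nat.divide (m j) n ->
              mul (pw mul one y n) (xs j) <> pw mul one z (m j)
}.

Definition tpow (M : TQModel) (y : M) (n : nat) : M := pw (mul M) (one M) y n.

Definition Re (M : TQModel) (n : nat) (y : M) : Prop := exists x : M, y = tpow M x n.

Definition RHS (M : TQModel) (n q : nat) (m : nat -> nat) (t : M) (s : nat -> M) : Prop :=
  forall j, j < q -> Nat.divide (m j) n -> ~ Re M (m j) (mul M (inv M t) (s j)).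

Definition Body (M : TQModel) (n q : nat) (m : nat -> nat) (t : M) (s : nat -> M) (x : M) : Prop :=
  Re M n (mul M x t) /\ (forall j, j < q -> ~ Re M (m j) (mul M x (s j))).

(* The conditions on [x * s_j] only matter up to [m_j]-th powers, so we look for [x] of the
   form [W * y^n * t^-1] with [W] a power divisible by [n] and by every [m_j].  Then [x * t]
   is an [n]-th power, and [x * s_j] is an [m_j]-th power iff [y^n * (t^-1 * s_j)] is one.
   When [m_j | n] this reduces to [t^-1 * s_j], which is excluded by the right-hand side;
   otherwise axiom M11 provides a [y] excluding it.  Density (M10) places [W], and hence [x],
   in any nonempty interval; the order has no end points, which handles the unbounded cases.
   Conversely, if [x * t = a^n] and [m_j | n] then [t^-1 * s_j = (x * s_j) / (x * t)] would
   make [x * s_j] an [m_j]-th power. *)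

From Stdlib Require Import Arith Lia.

Lemma divide_dec (d n : nat) : {Nat.divide d n} + {~ Nat.divide d n}.
Proof.
  destruct (Nat.eq_dec (n mod d) 0) as [E | E];
    [left | right]; rewrite <- Nat.Lcm0.mod_divide; exact E.
Qed.

Lemma common_multiple (m : nat -> nat) (q : nat) :
  (forall j, j < q -> 0 < m j) ->
  exists P, 0 < P /\ forall j, j < q -> Nat.divide (m j) P.
Proof.
  induction q as [| q IH]; intro Hm.
  - exists 1. split; [lia | intros j Hj; lia].
  - destruct IH as [P [HP HdivP]]; [intros j Hj; apply Hm; lia |].
    assert (Hq : 0 < m q) by (apply Hm; lia).
    exists (m q * P)%nat. split; [nia |].
    intros j Hj. destruct (Nat.eq_dec j q) as [-> | Hne].
    + apply Nat.divide_factor_l.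
    + apply Nat.divide_mul_r, HdivP. lia.
Qed.

Section TQModelTheory.

Variable M : TQModel.

Local Notation "a * b" := (mul M a b).
Local Notation "a ^-1" := (inv M a) (at level 2, format "a ^-1").
Local Notation tp := (tpow M).

Lemma mul_1_l (a : M) : one M * a = a.
Proof. rewrite M4; apply M2. Qed.

Lemma mul_inv_l (a : M) : a^-1 * a = one M.
Proof. rewrite M4; apply M3. Qed.

Lemma mul_shuffle1 (a b c d : M) : (a * b) * (c * d) = (a * c) * (b * d).
Proof. rewrite <- !M1, (M1 M b c d), (M4 M b c), <- M1. reflexivity. Qed.

Lemma inv_unique (a b : M) : a * b = one M -> b = a^-1.
Proof. intro H. rewrite <- (mul_1_l b), <- (mul_inv_l a), <- M1, H, M2. reflexivity. Qed.

Lemma tpow_succ (y : M) (k : nat) : tp y (S k) = y * tp y k.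
Proof. unfold tpow. destruct k; simpl; [symmetry; apply M2 | reflexivity]. Qed.

Lemma tpow_add (y : M) (a b : nat) : tp y (a + b) = tp y a * tp y b.
Proof.
  induction a as [| a IH]; simpl plus.
  - symmetry; apply mul_1_l.
  - rewrite !tpow_succ, IH, M1. reflexivity.
Qed.

Lemma tpow_mul_r (y : M) (a b : nat) : tp y (a * b)%nat = tp (tp y a) b.
Proof.
  induction b as [| b IH].
  - rewrite Nat.mul_0_r. reflexivity.
  - rewrite tpow_succ, <- IH, Nat.mul_succ_r, Nat.add_comm, tpow_add. reflexivity.
Qed.

Lemma tpow_mul_l (a b : M) (k : nat) : tp (a * b) k = tp a k * tp b k.
Proof.
  induction k as [| k IH].
  - symmetry; apply M2.
  - rewrite !tpow_succ, IH, mul_shuffle1. reflexivity.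
Qed.

Lemma tpow_1_l (k : nat) : tp (one M) k = one M.
Proof. induction k as [| k IH]; [reflexivity | rewrite tpow_succ, IH; apply M2]. Qed.

Lemma Re_mul (k : nat) (a b : M) : Re M k a -> Re M k b -> Re M k (a * b).
Proof. intros [x ->] [y ->]. exists (x * y). symmetry; apply tpow_mul_l. Qed.

Lemma Re_inv (k : nat) (a : M) : Re M k a -> Re M k a^-1.
Proof.
  intros [x ->]. exists x^-1.
  symmetry; apply inv_unique. rewrite <- tpow_mul_l, M3. apply tpow_1_l.
Qed.

Lemma Re_cancel_l (k : nat) (a b : M) : Re M k a -> Re M k (a * b) -> Re M k b.
Proof.
  intros Ha Hab. replace b with (a^-1 * (a * b)).
  - apply Re_mul; [apply Re_inv |]; assumption.
  - rewrite M1, mul_inv_l. apply mul_1_l.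
Qed.

Lemma Re_tpow (k c : nat) (y : M) : Re M k (tp y (c * k)%nat).
Proof. exists (tp y c). apply tpow_mul_r. Qed.

Lemma Re_divide (d k : nat) (a : M) : Nat.divide d k -> Re M k a -> Re M d a.
Proof. intros [c ->] [x ->]. rewrite tpow_mul_r. exists (tp x c). reflexivity. Qed.

Lemma lt_mul_l (a b c : M) : lt M a b -> lt M (c * a) (c * b).
Proof. intro H. rewrite (M4 M c a), (M4 M c b). apply M5, H. Qed.

Lemma exists_gt_1 : exists g : M, lt M (one M) g.
Proof.
  destruct (M6 M) as [y Hy]. destruct (O3 M y (one M)) as [H | [H | H]].
  - exists y^-1. apply (M5 M _ _ y^-1) in H. rewrite M3, mul_1_l in H. exact H.
  - contradiction.
  - exists y; exact H.
Qed.

Lemma exists_gt (a : M) : exists b, lt M a b.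
Proof.
  destruct exists_gt_1 as [g Hg]. exists (a * g).
  rewrite <- (M2 M a) at 1. apply lt_mul_l, Hg.
Qed.

Lemma exists_lt (a : M) : exists b, lt M b a.
Proof.
  destruct exists_gt_1 as [g Hg]. exists (a * g^-1).
  rewrite <- (M2 M a) at 2. apply lt_mul_l.
  apply (M5 M _ _ g^-1) in Hg. rewrite mul_1_l, M3 in Hg. exact Hg.
Qed.

(* M11 asks for [q >= 1] only to make its conjunction nonempty. *)
Lemma M11_all (n q : nat) (m : nat -> nat) :
  1 <= n -> (forall j, j < q -> 1 < m j) ->
  forall xs : nat -> M, exists y, forall z j, j < q -> ~ Nat.divide (m j) n ->
    tp y n * xs j <> tp z (m j).
Proof.
  intros Hn Hm xs. destruct q as [| q].
  - exists (one M). intros z j Hj. lia.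
  - apply (M11 M n (S q) m Hn ltac:(lia) Hm).
Qed.

Lemma exists_tpow_between (k : nat) (a b : M) :
  1 <= k -> lt M a b -> exists w, lt M a (tp w k) /\ lt M (tp w k) b.
Proof.
  intros Hk Hab. destruct (M10 M k Hk a b) as [w Hw]. exists w. exact (Hw Hab).
Qed.

Section Witness.

Variables (n q : nat) (m : nat -> nat) (t : M) (s : nat -> M).

Lemma RHS_of_Body (x : M) : Body M n q m t s x -> RHS M n q m t s.
Proof.
  intros [Hxt Hxs] j Hj Hdiv Hts. apply (Hxs j Hj).
  replace (x * s j) with ((x * t) * (t^-1 * s j)).
  - apply Re_mul; [apply (Re_divide _ n) |]; assumption.
  - rewrite <- M1, (M1 M t), M3, mul_1_l. reflexivity.
Qed.

Lemma Body_shift (y W : M) :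
  RHS M n q m t s ->
  (forall z j, j < q -> ~ Nat.divide (m j) n -> tp y n * (t^-1 * s j) <> tp z (m j)) ->
  Re M n W -> (forall j, j < q -> Re M (m j) W) ->
  Body M n q m t s (W * (tp y n * t^-1)).
Proof.
  intros HR Hy HWn HWm. split.
  - replace (W * (tp y n * t^-1) * t) with (W * tp y n)
      by (rewrite <- !M1, mul_inv_l, M2; reflexivity).
    apply Re_mul; [exact HWn | exists y; reflexivity].
  - intros j Hj Hxs.
    assert (Hys : Re M (m j) (tp y n * (t^-1 * s j))).
    { apply (Re_cancel_l _ W); [apply HWm, Hj |].
      rewrite <- !M1 in Hxs. exact Hxs. }
    destruct (divide_dec (m j) n) as [Hdiv | Hndiv].
    + apply (HR j Hj Hdiv), (Re_cancel_l _ (tp y n)); [| exact Hys].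
      apply (Re_divide _ n); [exact Hdiv | exists y; reflexivity].
    + destruct Hys as [z Hz]. exact (Hy z j Hj Hndiv Hz).
Qed.

Hypothesis Hm : forall j, j < q -> 1 < m j.

Lemma Body_between (u v : M) :
  1 < n -> RHS M n q m t s -> lt M u v ->
  exists x, lt M u x /\ lt M x v /\ Body M n q m t s x.
Proof.
  intros Hn HR Huv.
  destruct (M11_all n q m ltac:(lia) Hm (fun j => t^-1 * s j)) as [y Hy].
  destruct (common_multiple m q) as [P [HP HPdiv]]; [intros j Hj; specialize (Hm j Hj); lia |].
  set (c := tp y n * t^-1).
  assert (Hc : forall a, a * c^-1 * c = a) by (intro; rewrite <- M1, mul_inv_l; apply M2).
  destruct (exists_tpow_between (P * n)%nat (u * c^-1) (v * c^-1)) as [w [Hlo Hhi]];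
    [nia | apply M5, Huv |].
  exists (tp w (P * n)%nat * c). split; [| split].
  - rewrite <- (Hc u). apply M5, Hlo.
  - rewrite <- (Hc v). apply M5, Hhi.
  - apply Body_shift; [exact HR | exact Hy | apply Re_tpow |].
    intros j Hj. destruct (HPdiv j Hj) as [r Hr].
    replace (P * n)%nat with (r * n * m j)%nat by (rewrite Hr; lia). apply Re_tpow.
Qed.

End Witness.

End TQModelTheory.

Theorem lemma5 :
  forall (M : TQModel) (n q : nat) (m : nat -> nat),
    1 < n -> (forall j, j < q -> 1 < m j) ->
    forall (t : M) (s : nat -> M) (u v : M),
      ((exists x : M, Body M n q m t s x) <-> RHS M n q m t s) /\
      ((exists x : M, lt M u x /\ Body M n q m t s x) <-> RHS M n q m t s) /\
      ((exists x : M, lt M x v /\ Body M n q m t s x) <-> RHS M n q m t s) /\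
      ((exists x : M, lt M u x /\ lt M x v /\ Body M n q m t s x) <->
         (RHS M n q m t s /\ lt M u v)).
Proof.
  intros M n q m Hn Hm t s u v.
  pose proof (RHS_of_Body M n q m t s) as Hnec.
  pose proof (fun a b => Body_between M n q m t s Hm a b Hn) as Hsuf.
  destruct (exists_gt M u) as [u' Hu'].
  destruct (exists_lt M v) as [v' Hv'].
  split; [| split; [| split]]; split.
  - intros [x Hx]. exact (Hnec x Hx).
  - intro HR. destruct (Hsuf u u' HR Hu') as [x [_ [_ Hx]]]. exists x; exact Hx.
  - intros [x [_ Hx]]. exact (Hnec x Hx).
  - intro HR. destruct (Hsuf u u' HR Hu') as [x [Hux [_ Hx]]]. exists x; split; assumption.
  - intros [x [_ Hx]]. exact (Hnec x Hx).
  - intro HR. destruct (Hsuf v' v HR Hv') as [x [_ [Hxv Hx]]]. exists x; split; assumption.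
  - intros [x [Hux [Hxv Hx]]]. split; [exact (Hnec x Hx) | exact (O2 M u x v Hux Hxv)].
  - intros [HR Huv]. exact (Hsuf u v HR Huv).
Qed.
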